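(* Consider the networked SIR model with isolation on an undirected graph with nodes $\{1,\dots,n\}$ and adjacency matrix $A=(a_{ij})$, with fixed natural recovery rates $\delta_i>0$, infection rates $\beta_i$ and isolation times following phase-type distributions $(u_1,\Pi_i)$, where $\Pi_i\in\mathbb R^{p\times p}$ is parametrized by positive variables $\gamma_i=(\gamma_{i1},\dots,\gamma_{iq_i})$. Let a set of initially infected nodes, a budget $\bar C>0$, a level $\bar\lambda>0$, intervals $[\underline\beta_i,\bar\beta_i]\subset(0,\infty)$, boxes $\prod_{k=1}^{q_i}[\underline\gamma_{ik},\bar\gamma_{ik}]$ and cost functions $g_i,h_i$ be given. Let $w_i=-\Pi_i\mathbf 1_p$ and let $\mathcal D\Pi_i$, $\mathcal O\Pi_i$ denote the diagonal and off-diagonal parts of $\Pi_i$. Assume that for all $i$: (1) the entries of $w_i$ and of $\mathcal O\Pi_i$ are posynomials in $\gamma_i$; (2) the entries of $-\mathcal D\Pi_i$ are monomials in $\gamma_i$; (3) $g_i$ is a posynomial in $\beta_i$ and $h_i$ is a posynomial in $\gamma_i$. Let $\kappa_{i\ell}>0$, $\alpha_{i\ell}>0$ ($i\in[n]$, $\ell\in[p]$) be constants with $\kappa_{i\ell}(-\Pi_{i,\ell\ell})^{\alpha_{i\ell}}\le(-\Pi_{i,\ell\ell})+\delta_i$ for all possible values of $\gamma_i$. Let $J,B,D$ be the $n\times n$ diagonal matrices with $J_{ii}=S_i(0)$, $B_{ii}=\beta_i$, $D_{ii}=\delta_i$. Suppose $\beta_1,\dots,\beta_n,\gamma_1,\dots,\gamma_n$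 and an entrywise positive $v\in\mathbb R^{np}$ satisfy the posynomial constraints $$v^\top\Big(\bigoplus_{i=1}^n(\mathcal O\Pi_i)^\top+(JBA)\otimes(u_1\mathbf 1_p^\top)\Big)+\mathbf 1_n^\top\bigoplus_{i=1}^n w_i^\top+\mathbf 1_n^\top(D\otimes\mathbf 1_p^\top)<v^\top\bigoplus_{i=1}^n\bigoplus_{\ell=1}^p\kappa_{i\ell}(-\Pi_{i,\ell\ell})^{\alpha_{i\ell}},$$ $$\sum_{i=1}^n\big(g_i(\beta_i)+h_i(\gamma_i)\big)\le\bar C,\quad v^\top\tilde I(0)<\bar\lambda+\sigma_I(0),\quad \underline\beta_i\le\beta_i\le\bar\beta_i,\quad \gamma_i\in\prod_{k=1}^{q_i}[\underline\gamma_{ik},\bar\gamma_{ik}].$$ Then these parameters solve the resource allocation problem with isolation, i.e., the bound and budget constraints hold and the resulting SIR model with isolation satisfies $\lambda\le\bar\lambda$.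
   Context: Phase-type distribution $(\phi,\Pi)$: the distribution of the absorption time of a continuous-time Markov process on states $1,\dots,p+1$ ($1,\dots,p$ transient, $p+1$ absorbing) with generator $\begin{bmatrix}\Pi&w\\0&0\end{bmatrix}$, $w=-\Pi\mathbf 1_p$, $\Pi$ an invertible Metzler matrix with nonpositive row sums, and initial distribution $(\phi,0)$. SIR model with isolation: each node $i$ is at each time in exactly one of the states susceptible, infected, removed, with $\{0,1\}$-indicators $S_i(t),I_i(t),R_i(t)$. A susceptible node $i$ becomes infected with instantaneous rate $\beta_i\sum_j a_{ij}I_j(t)$. Once node $i$ becomes infected, it is removed after a time $\min(X_i,Y_i)$, where $X_i$ is exponential with rate $\delta_i$, $Y_i$ follows the phase-type distribution $(u_1,\Pi_i)$, independent of each other and of the rest of the process; removed nodes stay removed. At time $0$ each node is either susceptible or infected. $\sigma_I(t),\sigma_R(t)$ are the numbers of infected and removed nodes at time $t$; $\lambda=\lim_{t\to\infty}E[\sigma_R(t)]-\sigma_I(0)$. $\tilde I(0)\in\mathbb R^{np}$ stacks $\tilde I_i(0)=u_1$ if $i$ is initially infected and $0$ otherwise. A monomial in positive variables is $cx_1^{a_1}\cdots x_m^{a_m}$, $c>0$, $a_k\in\mathbb R$; a posynomial is a finite sum of monomials. $u_1$ is the first canonical basis vector of $\mathbb R^p$, $\mathbf 1_k$ the all-ones vector, $\otimes$ the Kronecker product, $\bigoplus$ the block-diagonal direct sum, $[n]=\{1,\dots,n\}$; vector inequalities are entrywise. *)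

From HB Require Import structures.
From mathcomp Require Import all_boot all_order all_algebra.
From mathcomp Require Import all_classical all_reals all_analysis.
Set Implicit Arguments. Unset Strict Implicit. Unset Printing Implicit Defensive.
Import Order.TTheory GRing.Theory Num.Theory.
Import numFieldNormedType.Exports.
Local Open Scope ring_scope.

Definition monomial (R : realType) (q : nat) (f : ('I_q -> R) -> R) : Prop :=
  exists (c : R) (a : 'I_q -> R), 0 < c /\
    forall x : 'I_q -> R, (forall k, 0 < x k) ->
      f x = c * \prod_(k < q) (x k `^ a k).

Definition posynomial (R : realType) (q : nat) (f : ('I_q -> R) -> R) : Prop :=
  exists s : seq (R * ('I_q -> R)), all (fun m => 0 < m.1) s /\
    forall x : 'I_q -> R, (forall k, 0 < x k) ->
      f x = \sum_(m <- s) (m.1 * \prod_(k < q) (x k `^ m.2 k)).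

Definition wvec (R : realType) (p : nat) (M : 'M[R]_p) (l : 'I_p) : R :=
  - \sum_(m < p) M l m.

Definition in_box (R : realType) (q : nat) (lo hi x : 'I_q -> R) : Prop :=
  forall k, lo k <= x k <= hi k.

(* Here the paper's number of phases is p.+1 (p >= 1 is needed for u_1).
   State of one node: inr false = susceptible, inl l = infected in isolation
   phase l (u_1 corresponds to phase ord0), inr true = removed. *)
Definition nstate (p : nat) := ('I_p.+1 + bool)%type.
Definition Sus {p : nat} : nstate p := inr false.
Definition Rem {p : nat} : nstate p := inr true.

Definition gstate (n p : nat) := {ffun 'I_n -> nstate p}.

Definition is_inf {p : nat} (s : nstate p) : bool :=
  if s is inl _ then true else false.

Section Model.
Variables (R : realType) (n p : nat) (A : 'M[R]_n) (beta delta : 'I_n -> R)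
          (Pi : 'I_n -> 'M[R]_p.+1).

Definition node_rate (i : 'I_n) (x : gstate n p) (a b : nstate p) : R :=
  match a, b with
  | inr false, inl l =>
      if l == ord0 then beta i * \sum_(j < n) A i j * (is_inf (x j))%:R else 0
  | inl l, inl m => if l != m then Pi i l m else 0
  | inl l, inr true => wvec (Pi i) l + delta i
  | _, _ => 0
  end.

Definition offrate (x y : gstate n p) : R :=
  \sum_(i < n) ([forall j, (j != i) ==> (x j == y j)])%:R
                * node_rate i x (x i) (y i).

Definition generator (x y : gstate n p) : R :=
  if x == y then - \sum_(z | z != x) offrate x z else offrate x y.
End Model.

Definition init_state (n p : nat) (infected : 'I_n -> bool) : gstate n p :=
  [ffun i => if infected i then inl ord0 else Sus].

Definition sigmaR (n p : nat) (x : gstate n p) : nat := #|[set i | x i == Rem]|.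

Definition sigmaI0 (n : nat) (infected : 'I_n -> bool) : nat :=
  #|[set i | infected i]|.

From HB Require Import structures.
From mathcomp Require Import all_boot all_order all_algebra.
From mathcomp Require Import all_classical all_reals all_analysis.
From mathcomp Require Import ring lra.
Set Implicit Arguments.
Unset Strict Implicit.
Unset Printing Implicit Defensive.

Import Order.TTheory GRing.Theory Num.Theory.
Import numFieldNormedType.Exports.
Local Open Scope classical_set_scope.
Local Open Scope ring_scope.

(* The law [P t] of the process solves the forward equation [P' = P Q], and
   since the off-diagonal rates are nonnegative it stays nonnegative: the sum
   of the squared negative parts of [P t] obeys a linear Gronwall inequality
   and vanishes at [t = 0].  The vector [v] defines an additive Lyapunov
   function [V] that dominates the number of removed nodes; the posynomial
   constraint, combined with [kappa (-Pi_ll)^alpha <= -Pi_ll + delta], says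
   precisely that [Q V <= 0], while [Q sigma_R >= 0].  Hence [E sigma_R(t)] is
   nondecreasing and bounded by [E V(0) = v^T I(0) < lambar + sigma_I(0)], so
   it converges to a limit below that bound. *)

Section Calculus.
Context {R : realType}.

Lemma is_derive_sumT (T : finType) (f : T -> R -> R) (df : T -> R) (t : R) :
  (forall x, is_derive t 1 (f x) (df x)) ->
  is_derive t 1 (fun s => \sum_x f x s) (\sum_x df x).
Proof.
move=> f_df; have -> : (fun s => \sum_x f x s) = \sum_x f x.
  by apply/funext => s; rewrite fct_sumE.
by elim/big_ind2 : _ => // *; [exact: is_derive_cst | exact: is_deriveD].
Qed.

Lemma is_derive_le0_nincr (f df : R -> R) :
  (forall t : R, is_derive t 1 f (df t)) -> (forall t, 0 < t -> df t <= 0) ->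
  forall s t, 0 <= s -> s <= t -> f t <= f s.
Proof.
move=> f_df df_le0; apply: (@ler0_derive1_nincry R f 0) => [t _|t|].
- by case: (f_df t).
- by rewrite in_itv /= andbT derive1E derive_val; exact: df_le0.
- apply: continuous_subspaceT => t.
  by apply/differentiable_continuous/derivable1_diffP; case: (f_df t).
Qed.

Lemma gronwall_eq0 (N dN : R -> R) (L : R) :
  (forall t : R, is_derive t 1 N (dN t)) -> (forall t, dN t <= L * N t) ->
  (forall t, 0 <= N t) -> N 0 = 0 -> forall t, 0 <= t -> N t = 0.
Proof.
move=> N_dN dN_le N_ge0 N0 t t0.
pose e s := expR (- L * s).
have e_de (s : R) : is_derive s 1 e (expR (- L * s) * - L).
  apply: is_derive1_comp; rewrite -[X in is_derive _ _ _ X]mulr1.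
  exact: (is_deriveZ (- L) (is_derive_id s 1)).
have : N t * e t <= N 0 * e 0.
  apply: (@is_derive_le0_nincr (N * e) _ (fun s => is_deriveM (N_dN s) (e_de s)))
    => // s _.
  change (N s * (e s * - L) + e s * dN s <= 0).
  have := dN_le s; have := expR_gt0 (- L * s); rewrite -/(e s); nra.
rewrite N0 mul0r pmulr_lle0 ?expR_gt0 // => Nt_le0.
by apply/eqP; rewrite eq_le Nt_le0 N_ge0.
Qed.

Definition sqr_negpart (u : R) : R := Num.min u 0 ^+ 2.

Lemma is_derive_sqr_negpart (u : R) :
  is_derive u 1 sqr_negpart (2 * Num.min u 0).
Proof.
have [u_lt0|u_gt0|->] := ltgtP u 0.
- have u_sq : is_derive u 1 (id ^+ 2) (2 * u).
    by apply: is_derive_eq; rewrite /= expr1 [_%:A]mulr1.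
  apply: near_eq_is_derive u_sq.
  near=> x; rewrite /sqr_negpart min_l //= ltW //.
  by near: x; exact: lt_nbhsl.
- rewrite mulr0.
  apply: near_eq_is_derive (is_derive_cst 0 u 1).
  near=> x; rewrite /sqr_negpart min_r ?expr0n // ltW //.
  by near: x; exact: lt_nbhsr.
- rewrite mulr0; apply/is_derive1_caratheodory.
  exists (fun z => Num.min z 0); split; last by rewrite minxx.
  + move=> z; rewrite /sqr_negpart minxx expr0n subr0 expr2.
    by case: leP; rewrite ?subr0 ?mul0r.
  + by apply: continuous_min; [exact: cvg_id | exact: cvg_cst].
Unshelve. all: by end_near.
Qed.

Lemma nondecreasing_bounded_cvg (f : R -> R) (B : R) :
  (forall s t, 0 <= s -> s <= t -> f s <= f t) -> (forall t, 0 <= t -> f t <= B) ->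
  exists l, f @ +oo --> l /\ l <= B.
Proof.
move=> f_ndecr f_le.
pose g (t : R) := f (Num.max t 0).
have max_ge0 (t : R) : 0 <= Num.max t 0 by rewrite le_max lexx orbT.
have g_ndecr : nondecreasing_fun g.
  by move=> s t st; apply: f_ndecr; rewrite ?ge_max ?le_max ?st ?lexx ?orbT.
have g_ub : has_ubound (range g) by exists B => _ [t _ <-]; exact: f_le.
have g_cvg := nondecreasing_cvgr g_ndecr g_ub.
exists (sup (range g)); split.
  apply: cvg_trans g_cvg; apply: near_eq_cvg; near=> t.
  by rewrite /g max_l //; near: t; exact: nbhs_pinfty_ge.
by apply: (cvgr_to_le g_cvg); near=> t; exact: f_le.
Unshelve. all: by end_near.
Qed.

End Calculus.

Section ForwardEquation.
Context {R : realType} {T : finType} {Q : T -> T -> R} {P : R -> T -> R}.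
Hypothesis P_forward : forall (t : R) x,
  is_derive t 1 (fun s => P s x) (\sum_y P t y * Q y x).

Lemma is_derive_forward_mean (c : T -> R) (t : R) :
  is_derive t 1 (fun s => \sum_x P s x * c x) (\sum_y P t y * \sum_x Q y x * c x).
Proof.
have -> : \sum_y P t y * \sum_x Q y x * c x = \sum_x (\sum_y P t y * Q y x) * c x.
  under eq_bigr do rewrite mulr_sumr; rewrite exchange_big /=.
  by apply: eq_bigr => x _; rewrite mulr_suml; under eq_bigr do rewrite mulrA.
apply: is_derive_sumT => x; rewrite mulrC.
have -> : (fun s => P s x * c x) = c x \*: (fun s => P s x).
  by apply/funext => s; rewrite /= mulrC.
exact: is_deriveZ.
Qed.

Hypothesis Q_offdiag_ge0 : forall x y, x != y -> 0 <= Q x y.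

Lemma forward_sqr_negpart_growth (t : R) :
  \sum_x 2 * Num.min (P t x) 0 * (\sum_y P t y * Q y x) <=
  ((2 * \sum_x \sum_y `|Q x y|) *+ #|T|) * \sum_x sqr_negpart (P t x).
Proof.
set K := \sum_x \sum_y `|Q x y|; set m := fun x => Num.min (P t x) 0.
have Q_le_K x y : `|Q x y| <= K.
  rewrite /K (bigD1 x) //= (bigD1 y) //= -addrA lerDl.
  by rewrite addr_ge0 // sumr_ge0 // => *; rewrite sumr_ge0.
have K_ge0 : 0 <= K by rewrite sumr_ge0 // => *; rewrite sumr_ge0.
have term_le x y : 2 * m x * (P t y * Q y x) <= K * (m x ^+ 2 + m y ^+ 2).
  have m_le0 z : m z <= 0 by rewrite /m ge_min lexx orbT.
  have : m x * (P t y * Q y x) <= m x * m y * Q y x.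
    have [->|yx] := eqVneq y x.
      suff mP : m x * P t x = m x * m x by rewrite mulrA mP.
      by rewrite /m; case: (leP (P t x) 0); rewrite ?mul0r.
    rewrite mulrA ler_wpM2r ?Q_offdiag_ge0 // ler_wnM2l //.
    by rewrite /m ge_min lexx.
  rewrite -[m x ^+ 2]real_normK ?num_real // -[m y ^+ 2]real_normK ?num_real //.
  have := ler_norm (m x * m y * Q y x); rewrite !normrM.
  have := ler_wpM2l (mulr_ge0 (normr_ge0 (m x)) (normr_ge0 (m y))) (Q_le_K y x).
  have := mulr_ge0 K_ge0 (sqr_ge0 (`|m x| - `|m y|)).
  nra.
apply: (@le_trans _ _ (\sum_x \sum_y K * (m x ^+ 2 + m y ^+ 2))).
  by apply: ler_sum => x _; rewrite mulr_sumr; apply: ler_sum => y _; exact: term_le.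
change (\sum_x sqr_negpart (P t x)) with (\sum_x m x ^+ 2).
under eq_bigr do rewrite -mulr_sumr big_split /= sumr_const.
rewrite -mulr_sumr big_split /= sumrMnl sumr_const -mulrnDl mulrnAr mulrnAl.
rewrite le_eqVlt; apply/predU1P; left; congr (_ *+ _); ring.
Qed.

Hypothesis P0_ge0 : forall x, 0 <= P 0 x.

Lemma forward_ge0 (t : R) x : 0 <= t -> 0 <= P t x.
Proof.
move=> t_ge0.
pose N s := \sum_x sqr_negpart (P s x).
pose dN s := \sum_x 2 * Num.min (P s x) 0 * (\sum_y P s y * Q y x).
have sqr_negpart_ge0 (u : R) : 0 <= sqr_negpart u by exact: sqr_ge0.
have N_eq0 : N t = 0.
  apply: (@gronwall_eq0 _ N dN _ _ forward_sqr_negpart_growth) => // [s|s|].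
  - apply: is_derive_sumT => y.
    exact: is_derive1_comp (is_derive_sqr_negpart _) (P_forward s y).
  - by apply: sumr_ge0 => y _.
  - by apply: big1 => y _; rewrite /sqr_negpart min_r ?expr0n.
have /eqP := @psumr_eq0P _ _ predT (fun y => sqr_negpart (P t y))
  (fun y _ => sqr_negpart_ge0 _) N_eq0 x isT.
by rewrite sqrf_eq0 => /eqP /min_idPr.
Qed.

Lemma forward_mean_nincr (c : T -> R) :
  (forall y, \sum_x Q y x * c x <= 0) ->
  forall s t, 0 <= s -> s <= t -> \sum_x P t x * c x <= \sum_x P s x * c x.
Proof.
move=> Qc_le0; apply: is_derive_le0_nincr (is_derive_forward_mean c) _ => t t_gt0.
by apply: sumr_le0 => y _; rewrite mulr_ge0_le0 ?forward_ge0 ?(ltW t_gt0).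
Qed.

Lemma forward_mean_ndecr (c : T -> R) :
  (forall y, 0 <= \sum_x Q y x * c x) ->
  forall s t, 0 <= s -> s <= t -> \sum_x P s x * c x <= \sum_x P t x * c x.
Proof.
move=> Qc_ge0 s t s_ge0 st; rewrite -lerN2 -!sumrN.
under eq_bigr do rewrite -mulrN; under [X in _ <= X]eq_bigr do rewrite -mulrN.
apply: forward_mean_nincr => // y.
by under eq_bigr do rewrite mulrN; rewrite sumrN oppr_le0.
Qed.
End ForwardEquation.

Lemma posynomial_ge0 (R : realType) (q : nat) (f : ('I_q -> R) -> R) (x : 'I_q -> R) :
  posynomial f -> (forall k, 0 < x k) -> 0 <= f x.
Proof.
move=> [s [s_gt0 f_eq]] x_gt0; rewrite f_eq // big_seq; apply: sumr_ge0 => m m_s.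
apply: mulr_ge0; first exact/ltW/(allP s_gt0).
by apply: prodr_ge0 => k _; exact: powR_ge0.
Qed.

Lemma sigmaR_sum (R : realType) (n p : nat) (x : gstate n p) :
  (sigmaR x)%:R = \sum_i ((x i == Rem)%:R : R).
Proof.
by rewrite /sigmaR -sum1dep_card natr_sum big_mkcond; apply: eq_bigr => i _; case: eqP.
Qed.

Section SIRGenerator.
Variables (R : realType) (n p : nat) (A : 'M[R]_n) (beta delta : 'I_n -> R)
  (Pi : 'I_n -> 'M[R]_p.+1).
Local Notation Q := (generator A beta delta Pi).
Local Notation rate := (node_rate A beta delta Pi).

Definition drift (V : gstate n p -> R) (y : gstate n p) : R := \sum_x Q y x * V x.

Definition set_node (y : gstate n p) (i : 'I_n) (b : nstate p) : gstate n p :=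
  [ffun j => if j == i then b else y j].

Lemma sum_set_node (y : gstate n p) (i : 'I_n) (G : gstate n p -> R) :
  \sum_(x : gstate n p) ([forall j, (j != i) ==> (y j == x j)])%:R * G x =
  \sum_b G (set_node y i b).
Proof.
rewrite (partition_big (fun x : gstate n p => x i) predT) //=; apply: eq_bigr => b _.
rewrite (bigD1 (set_node y i b)) /=; last by rewrite ffunE eqxx.
rewrite big1 ?addr0 => [|x /andP[/eqP xi_b x_neq]].
  suff -> : [forall j, (j != i) ==> (y j == set_node y i b j)] by rewrite mul1r.
  by apply/forallP => j; apply/implyP => ji; rewrite ffunE (negbTE ji).
case: forallP => [y_x|_]; last by rewrite mul0r.
case/eqP: x_neq; apply/ffunP => j; rewrite ffunE.
by case: eqVneq => [->|ji] //; apply/esym/eqP; move: (y_x j); rewrite ji.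
Qed.

Lemma drift_offrate (V : gstate n p -> R) (y : gstate n p) :
  drift V y = \sum_x offrate A beta delta Pi y x * (V x - V y).
Proof.
rewrite /drift (bigD1 y) //= [RHS](bigD1 y) //= subrr mulr0 add0r.
rewrite /generator eqxx mulNr mulr_suml -sumrN -big_split /=.
by apply: eq_bigr => x xy; rewrite eq_sym (negbTE xy) mulrBr addrC.
Qed.

Lemma drift_additive (phi : 'I_n -> nstate p -> R) (y : gstate n p) :
  drift (fun x => \sum_i phi i (x i)) y =
  \sum_i \sum_b rate i y (y i) b * (phi i b - phi i (y i)).
Proof.
rewrite drift_offrate; under eq_bigr do rewrite mulr_suml.
rewrite exchange_big /=; apply: eq_bigr => i _.
pose G x := rate i y (y i) (x i) * (phi i (x i) - phi i (y i)).
transitivity (\sum_b G (set_node y i b)); last first.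
  by apply: eq_bigr => b _; rewrite /G ffunE eqxx.
rewrite -(sum_set_node y i G); apply: eq_bigr => x _.
case: forallP => [y_x|_]; last by rewrite !mul0r.
rewrite !mul1r /G -sumrB (bigD1 i) //= big1 ?addr0 // => j ji.
by move: (y_x j); rewrite ji => /eqP ->; rewrite subrr.
Qed.

Section NonnegativeRates.
Hypotheses (beta_ge0 : forall i, 0 <= beta i) (A_ge0 : forall i j, 0 <= A i j)
  (Pi_offdiag_ge0 : forall i l m, l != m -> 0 <= Pi i l m)
  (exit_rate_ge0 : forall i l, 0 <= wvec (Pi i) l + delta i).

Lemma node_rate_ge0 i x a b : 0 <= rate i x a b.
Proof.
case: a => [l|[]]; case: b => [m|[]] //=.
- by case: ifP => // /Pi_offdiag_ge0.
- by case: ifP => // _; rewrite mulr_ge0 // sumr_ge0 // => j _; rewrite mulr_ge0.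
Qed.

Lemma generator_offdiag_ge0 x y : x != y -> 0 <= Q x y.
Proof.
move=> xy; rewrite /generator (negbTE xy).
by apply: sumr_ge0 => i _; rewrite mulr_ge0 ?node_rate_ge0.
Qed.

Lemma drift_removed_ge0 y : 0 <= drift (fun x => (sigmaR x)%:R) y.
Proof.
have -> : (fun x => (sigmaR x)%:R) =
          fun x : gstate n p => \sum_i ((x i == Rem)%:R : R).
  by apply/funext => x; exact: sigmaR_sum.
rewrite (drift_additive (fun _ b => (b == Rem)%:R)).
apply: sumr_ge0 => i _; apply: sumr_ge0 => b _.
have [->|y_i] := eqVneq (y i) Rem; first by case: b => [m|[]]; rewrite /= mul0r.
by rewrite subr0 mulr_ge0 ?node_rate_ge0.
Qed.

Section Lyapunov.
Variables (infected : 'I_n -> bool) (v : 'I_n -> 'I_p.+1 -> R).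
Hypothesis v_ge0 : forall i l, 0 <= v i l.

(* An initially infected node is never susceptible; valuing that state at
   [v i ord0] makes its infection drift-free, which is why the constraint only
   charges the initially susceptible nodes (the factor [J] of the paper). *)
Definition lyap_node (i : 'I_n) (b : nstate p) : R :=
  match b with
  | inl l => v i l
  | inr true => 1
  | inr false => if infected i then v i ord0 else 0
  end.

Definition lyap (x : gstate n p) : R := \sum_i lyap_node i (x i).

Lemma removed_le_lyap x : (sigmaR x)%:R <= lyap x.
Proof.
rewrite sigmaR_sum; apply: ler_sum => i _.
by case: (x i) => [l|[]] /=; rewrite ?v_ge0 //; case: ifP.
Qed.

Lemma lyap_init : lyap (init_state p infected) = \sum_(i | infected i) v i ord0.
Proof.
rewrite /lyap [RHS]big_mkcond; apply: eq_bigr => i _; rewrite ffunE.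
by case: ifP => /= infected_i; rewrite ?infected_i.
Qed.

Lemma lyap_node_drift i y :
  \sum_b rate i y (y i) b * (lyap_node i b - lyap_node i (y i)) =
  match y i with
  | inl l => \sum_(m | m != l) Pi i l m * (v i m - v i l)
             + (wvec (Pi i) l + delta i) * (1 - v i l)
  | inr false => (~~ infected i)%:R * beta i * v i ord0 *
                 \sum_j A i j * (is_inf (y j))%:R
  | inr true => 0
  end.
Proof.
rewrite big_sumType big_bool /=; case: (y i) => [l|[]] /=.
- rewrite mul0r addr0 [in RHS]big_mkcond /=; congr (_ + _); apply: eq_bigr => m _.
  by rewrite eq_sym; case: ifP; rewrite ?mul0r.
- by rewrite big1 => [|m _]; rewrite !mul0r ?addr0.
- rewrite !mul0r !addr0 (bigD1 ord0) //= [X in _ + X]big1 ?addr0; last first.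
    by move=> m /negbTE ->; rewrite mul0r.
  by case: (infected i); rewrite /= ?subrr ?subr0 ?mulr0; ring.
Qed.

Hypothesis lyap_decay : forall i l,
  \sum_(m < p.+1 | m != l) v i m * Pi i l m
  + \sum_j v j ord0 * ((~~ infected j)%:R * beta j * A j i)
  + wvec (Pi i) l + delta i <= v i l * (- Pi i l l + delta i).

Lemma drift_lyap_le0 y : drift lyap y <= 0.
Proof.
pose c i := (~~ infected i)%:R * beta i * v i ord0.
pose pressure i := \sum_j c j * A j i.
pose X i l := \sum_(m | m != l) Pi i l m * (v i m - v i l)
              + (wvec (Pi i) l + delta i) * (1 - v i l).
have X_le i l : X i l + pressure i <= 0.
  have w_eq : wvec (Pi i) l = - Pi i l l - \sum_(m | m != l) Pi i l m.
    by rewrite /wvec (bigD1 l) //= opprD.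
  have pressure_eq :
      pressure i = \sum_j v j ord0 * ((~~ infected j)%:R * beta j * A j i).
    by apply: eq_bigr => j _; rewrite /c; ring.
  have X_eq : X i l = \sum_(m | m != l) v i m * Pi i l m + wvec (Pi i) l + delta i
                      - v i l * (- Pi i l l + delta i).
    rewrite /X w_eq; under eq_bigr do rewrite mulrBr.
    by rewrite sumrB -mulr_suml; under eq_bigr do rewrite mulrC; ring.
  by rewrite X_eq pressure_eq; have := lyap_decay i l; lra.
have c_ge0 i : 0 <= c i by rewrite !mulr_ge0 ?ler0n.
have infected_nbrs_ge0 i : 0 <= \sum_j A i j * (is_inf (y j))%:R.
  by rewrite sumr_ge0 // => j _; rewrite mulr_ge0 ?ler0n.
rewrite /lyap drift_additive; under eq_bigr do rewrite lyap_node_drift.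
apply: (@le_trans _ _ (\sum_i ((if y i is inl l then X i l else 0)
                               + c i * \sum_j A i j * (is_inf (y j))%:R))).
  apply: ler_sum => i _; have := mulr_ge0 (c_ge0 i) (infected_nbrs_ge0 i).
  by case: (y i) => [l|[]] cs_ge0; rewrite ?lerDl ?add0r.
rewrite big_split /=.
have -> : \sum_i c i * \sum_j A i j * (is_inf (y j))%:R =
          \sum_j (is_inf (y j))%:R * pressure j.
  under eq_bigr do rewrite mulr_sumr; rewrite exchange_big /=.
  by apply: eq_bigr => j _; rewrite /pressure mulr_sumr; apply: eq_bigr => i _; ring.
rewrite -big_split /=; apply: sumr_le0 => i _.
by case: (y i) => [l|b] /=; rewrite ?mul1r ?X_le // mul0r addr0.
Qed.

Variable P : R -> gstate n p -> R.
Hypotheses (P0_ge0 : forall x, 0 <= P 0 x)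
  (P_forward : forall (t : R) x,
     is_derive t 1 (fun s => P s x) (\sum_y P t y * Q y x)).

Lemma expected_removed_cvg :
  exists l, (fun t => \sum_x P t x * (sigmaR x)%:R) @ +oo --> l /\
            l <= \sum_x P 0 x * lyap x.
Proof.
have Q_offdiag_ge0 := generator_offdiag_ge0.
apply: nondecreasing_bounded_cvg => [s t s_ge0 st|t t_ge0].
  apply: (forward_mean_ndecr P_forward Q_offdiag_ge0 P0_ge0) => // y.
  exact: drift_removed_ge0.
apply: le_trans (forward_mean_nincr P_forward Q_offdiag_ge0 P0_ge0
                   drift_lyap_le0 (lexx 0) t_ge0).
apply: ler_sum => x _; apply: ler_wpM2l (removed_le_lyap x).
exact: (forward_ge0 P_forward Q_offdiag_ge0 P0_ge0 x t_ge0).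
Qed.
End Lyapunov.
End NonnegativeRates.
End SIRGenerator.

Theorem theorem2 (R : realType) (n p : nat)
  (A : 'M[R]_n)
  (hA01 : forall i j, A i j = 0 \/ A i j = 1)
  (hAsym : forall i j, A i j = A j i)
  (delta : 'I_n -> R) (hdelta : forall i, 0 < delta i)
  (q : 'I_n -> nat) (Pi : forall i : 'I_n, ('I_(q i) -> R) -> 'M[R]_p.+1)
  (infected : 'I_n -> bool)
  (Cbar lambar : R) (hCbar : 0 < Cbar) (hlambar : 0 < lambar)
  (blo bhi : 'I_n -> R) (hb : forall i, 0 < blo i <= bhi i)
  (glo ghi : forall i : 'I_n, 'I_(q i) -> R)
  (hg : forall i k, 0 < glo i k <= ghi i k)
  (g : 'I_n -> R -> R) (h : forall i : 'I_n, ('I_(q i) -> R) -> R)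
  (H1w : forall i l, posynomial (fun gm => wvec (Pi i gm) l))
  (H1o : forall i l m, l != m -> posynomial (fun gm => Pi i gm l m))
  (H2 : forall i l, monomial (fun gm => - Pi i gm l l))
  (H3g : forall i, posynomial (fun x : 'I_1 -> R => g i (x ord0)))
  (H3h : forall i, posynomial (h i))
  (kappa alpha : 'I_n -> 'I_p.+1 -> R)
  (hkappa : forall i l, 0 < kappa i l) (halpha : forall i l, 0 < alpha i l)
  (Hkappa : forall i (gm : 'I_(q i) -> R), in_box (glo i) (ghi i) gm ->
     forall l, kappa i l * (- Pi i gm l l) `^ alpha i l <= - Pi i gm l l + delta i)
  (beta : 'I_n -> R) (gamma : forall i : 'I_n, 'I_(q i) -> R)
  (v : 'I_n -> 'I_p.+1 -> R) (hv : forall i l, 0 < v i l)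
  (Hinv : forall i, Pi i (gamma i) \in unitmx)
  (* main posynomial constraint, written entrywise at column (i,l) *)
  (Hc1 : forall i l,
     \sum_(m < p.+1 | m != l) v i m * Pi i (gamma i) l m
     + \sum_(j < n) v j ord0 * ((~~ infected j)%:R * beta j * A j i)
     + wvec (Pi i (gamma i)) l
     + delta i
     < v i l * (kappa i l * (- Pi i (gamma i) l l) `^ alpha i l))
  (Hc2 : \sum_(i < n) (g i (beta i) + h i (gamma i)) <= Cbar)
  (Hc3 : \sum_(i < n | infected i) v i ord0 < lambar + (sigmaI0 infected)%:R)
  (Hc4 : forall i, blo i <= beta i <= bhi i)
  (Hc5 : forall i, in_box (glo i) (ghi i) (gamma i)) :
  (forall i, blo i <= beta i <= bhi i) /\
  (forall i, in_box (glo i) (ghi i) (gamma i)) /\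
  \sum_(i < n) (g i (beta i) + h i (gamma i)) <= Cbar /\
  (forall P : R -> gstate n p -> R,
     (forall x, P 0 x = (x == init_state p infected)%:R) ->
     (forall (t : R) (x : gstate n p), is_derive t (1 : R) (fun s : R => P s x)
        (\sum_(y : gstate n p)
            P t y * generator A beta delta (fun i => Pi i (gamma i)) y x)) ->
     exists lim_R : R,
       (fun t => \sum_(x : gstate n p) P t x * (sigmaR x)%:R) @ +oo --> lim_R /\
       lim_R - (sigmaI0 infected)%:R <= lambar).
Proof.
split; first exact: Hc4.
split; first exact: Hc5.
split; first exact: Hc2.
move=> P P0 P_forward.
have gamma_gt0 i k : 0 < gamma i k.
  by case/andP: (hg i k) => glo_gt0 _; case/andP: (Hc5 i k) => /(lt_le_trans glo_gt0).
have beta_ge0 i : 0 <= beta i.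
  by case/andP: (hb i) => blo_gt0 _; case/andP: (Hc4 i) => /(lt_le_trans blo_gt0)/ltW.
have A_ge0 i j : 0 <= A i j by case: (hA01 i j) => ->.
have Pi_offdiag_ge0 i l m : l != m -> 0 <= Pi i (gamma i) l m.
  by move=> lm; exact: posynomial_ge0 (H1o i l m lm) (gamma_gt0 i).
have exit_rate_ge0 i l : 0 <= wvec (Pi i (gamma i)) l + delta i.
  exact: addr_ge0 (posynomial_ge0 (H1w i l) (gamma_gt0 i)) (ltW (hdelta i)).
have v_ge0 i l : 0 <= v i l := ltW (hv i l).
have lyap_decay i l := ltW (lt_le_trans (Hc1 i l)
  (ler_wpM2l (v_ge0 i l) (Hkappa i (gamma i) (Hc5 i) l))).
have P0_ge0 x : 0 <= P 0 x by rewrite P0.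
have [lim_R [lim_R_cvg lim_R_le]] := expected_removed_cvg beta_ge0 A_ge0
  Pi_offdiag_ge0 exit_rate_ge0 v_ge0 lyap_decay P0_ge0 P_forward.
exists lim_R; split => //; move: lim_R_le.
rewrite (bigD1 (init_state p infected)) //= big1 => [|x /negbTE x_init]; last first.
  by rewrite P0 x_init mul0r.
by rewrite P0 eqxx mul1r addr0 lyap_init; lra.
Qed.
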